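(* Let $\mathcal{A}\in\mathbb{R}^{l\times m\times n}$ and let $U_0\in\mathbb{R}^{l\times r_1}$, $V_0\in\mathbb{R}^{m\times r_2}$, $W_0\in\mathbb{R}^{n\times r_3}$ have orthonormal columns. Perform one block-Krylov step in each mode starting from $(U_0,V_0,W_0)$, giving $(U_1,V_1,W_1)$, and set \[ \mathcal{H}_0=\mathcal{A}\cdot(U_0,V_0,W_0),\quad \mathcal{H}^1_1=\mathcal{A}\cdot(U_1,V_0,W_0),\quad \mathcal{H}^2_1=\mathcal{A}\cdot(U_0,V_1,W_0),\quad \mathcal{H}^3_1=\mathcal{A}\cdot(U_0,V_0,W_1). \] Then the norm of the Grassmann gradient of $\Phi(U,V,W)=\|\mathcal{A}\cdot(U,V,W)\|^2$ at $(U_0,V_0,W_0)$ satisfies \[ \|\nabla(U_0,V_0,W_0)\|^2=\|\langle\mathcal{H}_0,\mathcal{H}^1_1\rangle_{-1}\|^2+\|\langle\mathcal{H}_0,\mathcal{H}^2_1\rangle_{-2}\|^2+\|\langle\mathcal{H}_0,\mathcal{H}^3_1\rangle_{-3}\|^2 . \]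
   Context: For $\mathcal{A}\in\mathbb{R}^{l\times m\times n}$ and matrices $U,V,W$ of compatible row dimensions, $\mathcal{A}\cdot(U,V,W)$ is the tensor with entries $\sum_{\alpha,\beta,\gamma}u_{\alpha i}v_{\beta j}w_{\gamma k}a_{\alpha\beta\gamma}$; $\mathcal{A}\cdot_{2,3}(V,W)$ is the analogous product in modes 2 and 3 only. Norms are Frobenius norms. Partial contractions: $\langle\mathcal{X},\mathcal{Y}\rangle_{-1}$ is the matrix with entries $\sum_{j,k}x_{ijk}y_{i'jk}$ (contraction over modes 2 and 3), and $\langle\cdot,\cdot\rangle_{-2}$, $\langle\cdot,\cdot\rangle_{-3}$ are defined analogously (contraction over all modes except mode 2, resp. mode 3). The mode-1 block-Krylov step from $(U_0,V_0,W_0)$ produces $U_1$ with orthonormal columns orthogonal to $U_0$ via a thin QR decomposition $(I-U_0U_0^T)\,\mathtt{unfold}_1(\mathcal{A}\cdot_{2,3}(V_0,W_0))=U_1H$, where $\mathtt{unfold}_1$ arranges the mode-1 fibers as columns; the mode-2 and mode-3 steps producing $V_1,W_1$ are analogous. The Grassmann gradient of $\Phi$ at $(U,V,W)$ (maximization over the product of Grassmann manifolds of the column spaces of $U,V,W$) is, in local coordinates, $(\langle\mathcal{F}^1_\perp,\mathcal{F}\rangle_{-1},\langle\mathcal{F}^2_\perp,\mathcal{F}\rangle_{-2},\langle\mathcal{F}^3_\perp,\mathcal{F}\rangle_{-3})$, where $\mathcal{F}=\mathcal{A}\cdot(U,V,W)$, $\mathcal{F}^1_\perp=\mathcal{A}\cdot(U_\perp,V,W)$,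 $\mathcal{F}^2_\perp=\mathcal{A}\cdot(U,V_\perp,W)$, $\mathcal{F}^3_\perp=\mathcal{A}\cdot(U,V,W_\perp)$, with $(U\,U_\perp)$ etc. square orthogonal matrices; its squared norm is the sum of squared Frobenius norms of the three components. *)

From mathcomp Require Import all_boot all_order all_algebra.
Set Implicit Arguments. Unset Strict Implicit. Unset Printing Implicit Defensive.
Import Order.TTheory GRing.Theory Num.Theory.
Local Open Scope ring_scope.

Section Defs.
Variable R : realFieldType.

Definition tensor (l m n : nat) := 'I_l -> 'I_m -> 'I_n -> R.

Definition tmul l m n p q s (A : tensor l m n)
  (U : 'M[R]_(l, p)) (V : 'M[R]_(m, q)) (W : 'M[R]_(n, s)) : tensor p q s :=
  fun i j k => \sum_(a < l) \sum_(b < m) \sum_(c < n) U a i * V b j * W c k * A a b c.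

Definition tmul23 l m n q s (A : tensor l m n) (V : 'M[R]_(m, q)) (W : 'M[R]_(n, s))
  : tensor l q s :=
  fun i j k => \sum_(b < m) \sum_(c < n) V b j * W c k * A i b c.
Definition tmul13 l m n p s (A : tensor l m n) (U : 'M[R]_(l, p)) (W : 'M[R]_(n, s))
  : tensor p m s :=
  fun i j k => \sum_(a < l) \sum_(c < n) U a i * W c k * A a j c.
Definition tmul12 l m n p q (A : tensor l m n) (U : 'M[R]_(l, p)) (V : 'M[R]_(m, q))
  : tensor p q n :=
  fun i j k => \sum_(a < l) \sum_(b < m) U a i * V b j * A a b k.

(* mode-k unfoldings: the mode-k fibers become the columns
   (columns ordered by mxvec of the remaining two indices) *)
Definition unfold1 p q s (X : tensor p q s) : 'M[R]_(p, q * s) :=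
  \matrix_(i < p) mxvec (\matrix_(j < q, k < s) X i j k).
Definition unfold2 p q s (X : tensor p q s) : 'M[R]_(q, p * s) :=
  \matrix_(j < q) mxvec (\matrix_(i < p, k < s) X i j k).
Definition unfold3 p q s (X : tensor p q s) : 'M[R]_(s, p * q) :=
  \matrix_(k < s) mxvec (\matrix_(i < p, j < q) X i j k).

Definition pcontr1 p p' q s (X : tensor p q s) (Y : tensor p' q s) : 'M[R]_(p, p') :=
  \matrix_(i, i') \sum_(j < q) \sum_(k < s) X i j k * Y i' j k.
Definition pcontr2 p q q' s (X : tensor p q s) (Y : tensor p q' s) : 'M[R]_(q, q') :=
  \matrix_(j, j') \sum_(i < p) \sum_(k < s) X i j k * Y i j' k.
Definition pcontr3 p q s s' (X : tensor p q s) (Y : tensor p q s') : 'M[R]_(s, s') :=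
  \matrix_(k, k') \sum_(i < p) \sum_(j < q) X i j k * Y i j k'.

Definition fnorm2 a b (M : 'M[R]_(a, b)) : R := \sum_(i < a) \sum_(j < b) M i j ^+ 2.

Definition orthonormal_cols a b (M : 'M[R]_(a, b)) : Prop := M^T *m M = 1%:M.

(* (U Uperp) is a square orthogonal matrix *)
Definition orth_complement a b c (U : 'M[R]_(a, b)) (Up : 'M[R]_(a, c)) : Prop :=
  [/\ (b + c = a)%N, orthonormal_cols U, orthonormal_cols Up & U^T *m Up = 0].

Definition upper_triangular a b (H : 'M[R]_(a, b)) : Prop :=
  forall (i : 'I_a) (j : 'I_b), (j < i)%N -> H i j = 0.

Definition thin_QR a b c (X : 'M[R]_(a, b)) (Q : 'M[R]_(a, c)) (H : 'M[R]_(c, b)) : Prop :=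
  [/\ orthonormal_cols Q, upper_triangular H & X = Q *m H].

Definition krylov_step1 l m n r1 r2 r3 p1 (A : tensor l m n)
  (U0 : 'M[R]_(l, r1)) (V0 : 'M[R]_(m, r2)) (W0 : 'M[R]_(n, r3))
  (U1 : 'M[R]_(l, p1)) (H : 'M[R]_(p1, r2 * r3)) : Prop :=
  U0^T *m U1 = 0 /\
  thin_QR ((1%:M - U0 *m U0^T) *m unfold1 (tmul23 A V0 W0)) U1 H.
Definition krylov_step2 l m n r1 r2 r3 p2 (A : tensor l m n)
  (U0 : 'M[R]_(l, r1)) (V0 : 'M[R]_(m, r2)) (W0 : 'M[R]_(n, r3))
  (V1 : 'M[R]_(m, p2)) (H : 'M[R]_(p2, r1 * r3)) : Prop :=
  V0^T *m V1 = 0 /\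
  thin_QR ((1%:M - V0 *m V0^T) *m unfold2 (tmul13 A U0 W0)) V1 H.
Definition krylov_step3 l m n r1 r2 r3 p3 (A : tensor l m n)
  (U0 : 'M[R]_(l, r1)) (V0 : 'M[R]_(m, r2)) (W0 : 'M[R]_(n, r3))
  (W1 : 'M[R]_(n, p3)) (H : 'M[R]_(p3, r1 * r2)) : Prop :=
  W0^T *m W1 = 0 /\
  thin_QR ((1%:M - W0 *m W0^T) *m unfold3 (tmul12 A U0 V0)) W1 H.

(* squared norm of the Grassmann gradient of Phi at (U,V,W), in the local
   coordinates given by the orthogonal complements Up, Vp, Wp *)
Definition grassmann_grad_sqnorm l m n r1 r2 r3 l1 m1 n1 (A : tensor l m n)
  (U : 'M[R]_(l, r1)) (V : 'M[R]_(m, r2)) (W : 'M[R]_(n, r3))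
  (Up : 'M[R]_(l, l1)) (Vp : 'M[R]_(m, m1)) (Wp : 'M[R]_(n, n1)) : R :=
  let F := tmul A U V W in
  fnorm2 (pcontr1 (tmul A Up V W) F) + fnorm2 (pcontr2 (tmul A U Vp W) F)
  + fnorm2 (pcontr3 (tmul A U V Wp) F).

End Defs.

From mathcomp Require Import all_boot all_order all_algebra ring.
Import Order.TTheory GRing.Theory Num.Theory.
Local Open Scope ring_scope.

(** Write B for the mode-1 unfolding of A ._{2,3} (V0, W0).  Both mode-1
    contractions are Gram-type products of unfoldings: the gradient component
    is U0p^T B B^T U0 and the Krylov component is U0^T B B^T U1.  The QR step
    (I - U0 U0^T) B = U1 H gives U1^T B = H and U0p^T B = (U0p^T U1) H, where
    U0p^T U1 has orthonormal columns because the columns of U1 lie in the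
    range of U0p.  Since multiplication by a matrix with orthonormal columns
    preserves the Frobenius norm, both components have the norm of H B^T U0.
    The other two modes are handled by the same argument. *)

Lemma sum_mxvec_index (V : nmodType) q s (F : 'I_(q * s) -> V) :
  \sum_x F x = \sum_(j < q) \sum_(k < s) F (mxvec_index j k).
Proof.
rewrite pair_big /= (reindex (uncurry (@mxvec_index q s))) /=.
  by apply: eq_bigr => -[].
exact: (subon_bij _ (@curry_mxvec_bij _ _)).
Qed.

Section GrassmannKrylov.
Variable R : realFieldType.
Set Implicit Arguments.

Section Unfoldings.
Variables p q s : nat.
Implicit Type X : tensor R p q s.

Lemma unfold1E X i j k : unfold1 X i (mxvec_index j k) = X i j k.
Proof. by rewrite !mxE mxvecE mxE. Qed.

Lemma unfold2E X i j k : unfold2 X j (mxvec_index i k) = X i j k.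
Proof. by rewrite !mxE mxvecE mxE. Qed.

Lemma unfold3E X i j k : unfold3 X k (mxvec_index i j) = X i j k.
Proof. by rewrite !mxE mxvecE mxE. Qed.

End Unfoldings.

Lemma pcontr1E p p' q s (X : tensor R p q s) (Y : tensor R p' q s) :
  pcontr1 X Y = unfold1 X *m (unfold1 Y)^T.
Proof.
apply/matrixP => i i'; rewrite !mxE sum_mxvec_index.
by apply: eq_bigr => j _; apply: eq_bigr => k _; rewrite [_^T _ _]mxE !unfold1E.
Qed.

Lemma pcontr2E p q q' s (X : tensor R p q s) (Y : tensor R p q' s) :
  pcontr2 X Y = unfold2 X *m (unfold2 Y)^T.
Proof.
apply/matrixP => j j'; rewrite !mxE sum_mxvec_index.
by apply: eq_bigr => i _; apply: eq_bigr => k _; rewrite [_^T _ _]mxE !unfold2E.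
Qed.

Lemma pcontr3E p q s s' (X : tensor R p q s) (Y : tensor R p q s') :
  pcontr3 X Y = unfold3 X *m (unfold3 Y)^T.
Proof.
apply/matrixP => k k'; rewrite !mxE sum_mxvec_index.
by apply: eq_bigr => i _; apply: eq_bigr => j _; rewrite [_^T _ _]mxE !unfold3E.
Qed.

Section MultilinearProduct.
Variables (l m n p q s : nat) (A : tensor R l m n).
Variables (U : 'M[R]_(l, p)) (V : 'M[R]_(m, q)) (W : 'M[R]_(n, s)).

Lemma unfold1_tmul : unfold1 (tmul A U V W) = U^T *m unfold1 (tmul23 A V W).
Proof.
apply/matrixP => i x; case/mxvec_indexP: x => j k.
rewrite unfold1E !mxE; apply: eq_bigr => a _.
rewrite mxE unfold1E mulr_sumr; apply: eq_bigr => b _.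
by rewrite mulr_sumr; apply: eq_bigr => c _; rewrite !mulrA.
Qed.

Lemma unfold2_tmul : unfold2 (tmul A U V W) = V^T *m unfold2 (tmul13 A U W).
Proof.
apply/matrixP => j x; case/mxvec_indexP: x => i k.
rewrite unfold2E !mxE.
under [RHS]eq_bigr => b _ do rewrite mxE unfold2E mulr_sumr.
rewrite exchange_big /=; apply: eq_bigr => a _; apply: eq_bigr => b _.
by rewrite mulr_sumr; apply: eq_bigr => c _; ring.
Qed.

Lemma unfold3_tmul : unfold3 (tmul A U V W) = W^T *m unfold3 (tmul12 A U V).
Proof.
apply/matrixP => k x; case/mxvec_indexP: x => i j.
rewrite unfold3E !mxE.
under [RHS]eq_bigr => c _ do rewrite mxE unfold3E mulr_sumr.
rewrite [RHS]exchange_big /=; apply: eq_bigr => a _.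
under [RHS]eq_bigr => c _ do rewrite mulr_sumr.
by rewrite [RHS]exchange_big /=; apply: eq_bigr => b _; apply: eq_bigr => c _; ring.
Qed.

End MultilinearProduct.

Lemma fnorm2_trace a b (M : 'M[R]_(a, b)) : fnorm2 M = \tr (M *m M^T).
Proof.
rewrite /fnorm2 /mxtrace; apply: eq_bigr => i _; rewrite mxE.
by apply: eq_bigr => j _; rewrite mxE expr2.
Qed.

Lemma fnorm2_trmx a b (M : 'M[R]_(a, b)) : fnorm2 M^T = fnorm2 M.
Proof. by rewrite !fnorm2_trace trmxK mxtrace_mulC. Qed.

Lemma fnorm2_mull_orthonormal a b c (C : 'M[R]_(a, b)) (M : 'M[R]_(b, c)) :
  orthonormal_cols C -> fnorm2 (C *m M) = fnorm2 M.
Proof.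
move=> oC; rewrite !fnorm2_trace trmx_mul mxtrace_mulC mulmxA.
by rewrite -(mulmxA M^T) oC mulmx1 mxtrace_mulC.
Qed.

Lemma trmx_mul_eq0 a b c (X : 'M[R]_(a, b)) (Y : 'M[R]_(a, c)) :
  X^T *m Y = 0 -> Y^T *m X = 0.
Proof. by move=> XY0; rewrite -[X]trmxK -trmx_mul XY0 trmx0. Qed.

Lemma orth_complement_proj a b c (U : 'M[R]_(a, b)) (Up : 'M[R]_(a, c)) :
  orth_complement U Up -> Up *m Up^T = 1%:M - U *m U^T.
Proof.
case=> eq_a oU oUp oUUp; subst a.
have QtQ : (row_mx U Up)^T *m row_mx U Up = 1%:M.
  by rewrite tr_row_mx mul_col_row oU oUp oUUp (trmx_mul_eq0 oUUp) -scalar_mx_block.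
have := mulmx1C QtQ; rewrite tr_row_mx mul_row_col => <-.
by rewrite addrC addKr.
Qed.

Section KrylovStep.
Variables (l r c p N : nat).
Variables (U0 : 'M[R]_(l, r)) (U0p : 'M[R]_(l, c)) (U1 : 'M[R]_(l, p)).
Variables (H : 'M[R]_(p, N)) (B : 'M[R]_(l, N)).
Hypothesis U0_U0p : orth_complement U0 U0p.
Hypothesis U0_U1 : U0^T *m U1 = 0.
Hypothesis QR : thin_QR ((1%:M - U0 *m U0^T) *m B) U1 H.

Lemma krylov_coef : U1^T *m B = H.
Proof.
case: QR => oU1 _ eqB.
have := congr1 (mulmx U1^T) eqB; rewrite mulmxA oU1 mul1mx => <-.
by rewrite mulmxA mulmxBr mulmx1 mulmxA (trmx_mul_eq0 U0_U1) mul0mx subr0.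
Qed.

Lemma orth_complement_krylov_coef : U0p^T *m B = (U0p^T *m U1) *m H.
Proof.
case: QR U0_U0p => _ _ eqB [_ _ _ oUUp].
rewrite -mulmxA -eqB mulmxA mulmxBr mulmx1 mulmxA.
by rewrite (trmx_mul_eq0 oUUp) mul0mx subr0.
Qed.

Lemma orth_complement_krylov_orthonormal : orthonormal_cols (U0p^T *m U1).
Proof.
case: QR => oU1 _ _.
have U0p_U1 : U0p *m (U0p^T *m U1) = U1.
  rewrite mulmxA (orth_complement_proj U0_U0p) mulmxBl mul1mx.
  by rewrite -mulmxA U0_U1 mulmx0 subr0.
by rewrite /orthonormal_cols trmx_mul trmxK -mulmxA U0p_U1.
Qed.

Lemma fnorm2_gradient_krylov :
  fnorm2 (U0p^T *m B *m (U0^T *m B)^T) = fnorm2 (U0^T *m B *m (U1^T *m B)^T).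
Proof.
rewrite orth_complement_krylov_coef krylov_coef -mulmxA.
rewrite (fnorm2_mull_orthonormal _ orth_complement_krylov_orthonormal).
by rewrite -fnorm2_trmx trmx_mul trmxK.
Qed.

End KrylovStep.

End GrassmannKrylov.

Theorem proposition4p2 (R : realFieldType) (l m n r1 r2 r3 : nat)
  (A : tensor R l m n)
  (U0 : 'M[R]_(l, r1)) (V0 : 'M[R]_(m, r2)) (W0 : 'M[R]_(n, r3))
  (p1 p2 p3 : nat)
  (U1 : 'M[R]_(l, p1)) (V1 : 'M[R]_(m, p2)) (W1 : 'M[R]_(n, p3))
  (HU : 'M[R]_(p1, r2 * r3)) (HV : 'M[R]_(p2, r1 * r3)) (HW : 'M[R]_(p3, r1 * r2))
  (l1 m1 n1 : nat)
  (U0p : 'M[R]_(l, l1)) (V0p : 'M[R]_(m, m1)) (W0p : 'M[R]_(n, n1)) :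
  orthonormal_cols U0 -> orthonormal_cols V0 -> orthonormal_cols W0 ->
  krylov_step1 A U0 V0 W0 U1 HU ->
  krylov_step2 A U0 V0 W0 V1 HV ->
  krylov_step3 A U0 V0 W0 W1 HW ->
  orth_complement U0 U0p -> orth_complement V0 V0p -> orth_complement W0 W0p ->
  let H0 := tmul A U0 V0 W0 in
  let H11 := tmul A U1 V0 W0 in
  let H21 := tmul A U0 V1 W0 in
  let H31 := tmul A U0 V0 W1 in
  grassmann_grad_sqnorm A U0 V0 W0 U0p V0p W0p =
  fnorm2 (pcontr1 H0 H11) + fnorm2 (pcontr2 H0 H21) + fnorm2 (pcontr3 H0 H31).
Proof.
(* orthonormality of U0, V0, W0 is already part of orth_complement *)
move=> _ _ _ [U0_U1 QRU] [V0_V1 QRV] [W0_W1 QRW] U0_U0p V0_V0p W0_W0p /=.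
rewrite /grassmann_grad_sqnorm /=.
rewrite !pcontr1E !pcontr2E !pcontr3E !unfold1_tmul !unfold2_tmul !unfold3_tmul.
by rewrite (fnorm2_gradient_krylov U0_U0p U0_U1 QRU)
  (fnorm2_gradient_krylov V0_V0p V0_V1 QRV) (fnorm2_gradient_krylov W0_W0p W0_W1 QRW).
Qed.
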